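(* Let $(t_k)_{k\in\mathbb{N}}$ be a strictly increasing sequence with $t_1=\pi/4$ and $t_k\to\pi/2$. In $\mathbb{R}^3$ let $C_1=\mathrm{co}\{(-2,2,1),(-2,2,-1)\}$, $C_2=\mathrm{co}\{(2,2,1),(2,2,-1)\}$ and $C_3=\overline{\mathrm{co}}\{(\cos t_k,\sin t_k,(-1)^k): k\in\mathbb{N}\}$, and let $C_1'=\{(-2,2)\}$, $C_2'=\{(2,2)\}$, $C_3'=\overline{\mathrm{co}}\{(\cos t_k,\sin t_k):k\in\mathbb{N}\}\subseteq\mathbb{R}^2$ be their projections onto the $xy$-plane. Then for each $\varepsilon\in(0,1)$ there exists a unique $\varepsilon$-cycle $(u_1,u_2,u_3)$ for $C_1,C_2,C_3$, and there exists a unique $\varepsilon$-cycle $(u_1',u_2',u_3')$ for $C_1',C_2',C_3'$.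
   Context: For a nonempty closed convex set $C$ in a Euclidean space, $\Pi_C(u)$ denotes the Euclidean projection of $u$ onto $C$. For three nonempty closed convex sets $D_1,D_2,D_3$ and $\varepsilon\in(0,1]$, an $\varepsilon$-cycle is a triple $(u_1,u_2,u_3)$ with $u_1=u_3+\varepsilon(\Pi_{D_1}(u_3)-u_3)$, $u_2=u_1+\varepsilon(\Pi_{D_2}(u_1)-u_1)$, $u_3=u_2+\varepsilon(\Pi_{D_3}(u_2)-u_2)$. $\mathrm{co}$ denotes convex hull and $\overline{\mathrm{co}}$ closed convex hull. *)

From HB Require Import structures.
From mathcomp Require Import all_boot all_order all_algebra.
From mathcomp Require Import all_classical all_reals all_analysis.
Set Implicit Arguments. Unset Strict Implicit. Unset Printing Implicit Defensive.
Import Order.TTheory GRing.Theory Num.Theory.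
Import numFieldNormedType.Exports.
Local Open Scope classical_set_scope.
Local Open Scope ring_scope.

Section Defs.
Variable R : realType.

Definition enorm n (v : 'rV[R]_n) : R := Num.sqrt (\sum_(i < n) v ord0 i ^+ 2).

Definition conv_hull n (A : set 'rV[R]_n) : set 'rV[R]_n :=
  [set x | exists (m : nat) (w : 'I_m -> R) (a : 'I_m -> 'rV[R]_n),
     (forall i, 0 <= w i) /\ \sum_(i < m) w i = 1 /\ (forall i, A (a i)) /\
     x = \sum_(i < m) w i *: a i].

(* closed convex hull: closure of the convex hull (the topology on 'rV_n is the
   product topology, i.e. the Euclidean one) *)
Definition cl_conv_hull n (A : set 'rV[R]_n) : set 'rV[R]_n :=
  closure (conv_hull A).

Definition is_proj n (C : set 'rV[R]_n) (u p : 'rV[R]_n) : Prop :=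
  C p /\ forall q, C q -> enorm (u - p) <= enorm (u - q).

Definition eps_cycle n (D1 D2 D3 : set 'rV[R]_n) (eps : R)
  (u1 u2 u3 : 'rV[R]_n) : Prop :=
  exists p1 p2 p3,
    is_proj D1 u3 p1 /\ is_proj D2 u1 p2 /\ is_proj D3 u2 p3 /\
    u1 = u3 + eps *: (p1 - u3) /\
    u2 = u1 + eps *: (p2 - u1) /\
    u3 = u2 + eps *: (p3 - u2).

Definition pt3 (x y z : R) : 'rV[R]_3 :=
  \row_(i < 3) match val i with 0%N => x | 1%N => y | _ => z end.
Definition pt2 (x y : R) : 'rV[R]_2 :=
  \row_(i < 2) match val i with 0%N => x | _ => y end.
End Defs.

From HB Require Import structures.
From mathcomp Require Import all_boot all_order all_algebra.
From mathcomp Require Import all_classical all_reals all_analysis.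
From mathcomp Require Import ring lra.
Set Implicit Arguments. Unset Strict Implicit. Unset Printing Implicit Defensive.
Import Order.TTheory GRing.Theory Num.Theory.
Import numFieldNormedType.Exports.
Local Open Scope classical_set_scope.
Local Open Scope ring_scope.

(* Write a cycle through its three projection points p1, p2, p3. The cycle
   equations are linear, so u1, u2, u3 are explicit affine functions of the
   p_i, and u2 - p3 is a positive multiple of w - p3 with
   w = ((1 - eps) p1 + p2) / (2 - eps): thus p3 is the projection of w onto the
   third set, and the cycle is unique as soon as the triple (p1, p2, p3) is.
   In the plane p1, p2 are the two given points and p3 is the projection of w
   onto a closed convex set.
   In space the projections onto the vertical segments contract the heights
   towards [-1, 1], which forces every height to equal that of p3; then
   w = (2 eps / (2 - eps), 2, z3), so the horizontal part of p3 is the unique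
   point of C3 horizontally closest to (2 eps / (2 - eps), 2). It remains to see
   that C3 has a single point above it. That point lies on a supporting line of
   the circle arc, which carries at most two generators and stays away from
   their limit (0, 1): the corresponding face of C3 is the hull of at most two
   generators, a point or a non-vertical segment, which meets each vertical line
   at most once. *)

Lemma le0_of_linear_le_quadratic (R : realFieldType) (a b : R) : 0 <= b ->
  (forall l, 0 < l <= 1 -> 2 * l * a <= l ^+ 2 * b) -> a <= 0.
Proof.
move=> b0 H; rewrite leNgt; apply/negP => a0.
pose l := a / (a + b).
have l0 : 0 < l by rewrite divr_gt0 ?ltr_wpDr.
have l1 : l <= 1 by rewrite ler_pdivrMr ?ltr_wpDr // mul1r lerDl.
have lab : l * (a + b) = a by rewrite mulfVK // gt_eqF ?ltr_wpDr.
have := H l; rewrite l0 l1 => /(_ isT); nra.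
Qed.

Section Euclidean.
Variables (R : realType) (n : nat).
Implicit Types (C : set 'rV[R]_n) (d u v w p q : 'rV[R]_n).

Definition dotv u v : R := \sum_(i < n) u 0 i * v 0 i.

(* The weights [pt3 1 1 0] below measure horizontal distance only. *)
Definition wdot d u v : R := \sum_(i < n) d 0 i * (u 0 i * v 0 i).

Definition convex_rV C :=
  forall x y l, 0 <= l <= 1 -> C x -> C y -> C (x + l *: (y - x)).

Lemma wdotZl d u v k : wdot d (k *: u) v = k * wdot d u v.
Proof. by rewrite /wdot mulr_sumr; apply: eq_bigr => i _; rewrite mxE; ring. Qed.

Lemma wdot_subZ d u v l :
  wdot d (u - l *: v) (u - l *: v) = wdot d u u - 2 * l * wdot d u v + l ^+ 2 * wdot d v v.
Proof.
rewrite /wdot !mulr_sumr -sumrB -big_split /=.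
by apply: eq_bigr => i _; rewrite !mxE; ring.
Qed.

Lemma wdot_obtuse_sum d w p q :
  wdot d (w - p) (q - p) + wdot d (w - q) (p - q) = wdot d (p - q) (p - q).
Proof. by rewrite /wdot -big_split /=; apply: eq_bigr => i _; rewrite !mxE; ring. Qed.

Section NonnegWeights.
Variable d : 'rV[R]_n.
Hypothesis d_ge0 : forall i, 0 <= d 0 i.

Lemma wdot_ge0 u : 0 <= wdot d u u.
Proof. by apply: sumr_ge0 => i _; rewrite mulr_ge0 // -expr2 sqr_ge0. Qed.

Lemma wdot_le0_coord u : wdot d u u <= 0 -> forall i, 0 < d 0 i -> u 0 i = 0.
Proof.
move=> u0 i di.
have /eqP sum0 : wdot d u u == 0 by rewrite eq_le u0 wdot_ge0.
have /eqP : d 0 i * (u 0 i * u 0 i) = 0.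
  by apply: (psumr_eq0P _ sum0) => // j _; rewrite mulr_ge0 // -expr2 sqr_ge0.
by rewrite mulf_eq0 gt_eqF //= -expr2 sqrf_eq0 => /eqP.
Qed.

Lemma wdot_min_obtuse C w p : convex_rV C -> C p ->
    (forall q, C q -> wdot d (w - p) (w - p) <= wdot d (w - q) (w - q)) ->
  forall q, C q -> wdot d (w - p) (q - p) <= 0.
Proof.
move=> Cconv Cp pmin q Cq.
apply: (le0_of_linear_le_quadratic (wdot_ge0 (q - p))) => l /andP[l0 l1].
have l01 : 0 <= l <= 1 by rewrite l1 ltW.
have := pmin _ (Cconv _ _ _ l01 Cp Cq).
by rewrite opprD addrA wdot_subZ; lra.
Qed.

Lemma obtuse_wdot_min C w p :
    (forall q, C q -> wdot d (w - p) (q - p) <= 0) ->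
  forall q, C q -> wdot d (w - p) (w - p) <= wdot d (w - q) (w - q).
Proof.
move=> obtuse q Cq.
have -> : w - q = (w - p) - 1 *: (q - p) by rewrite scale1r opprB addrA subrK.
by rewrite wdot_subZ expr1n; have := obtuse q Cq; have := wdot_ge0 (q - p); lra.
Qed.

Lemma obtuse_wdot_coord C w p q : C p -> C q ->
    (forall x, C x -> wdot d (w - p) (x - p) <= 0) ->
    (forall x, C x -> wdot d (w - q) (x - q) <= 0) ->
  forall i, 0 < d 0 i -> p 0 i = q 0 i.
Proof.
move=> Cp Cq op oq i di; apply/eqP; rewrite -subr_eq0; apply/eqP.
have := @wdot_le0_coord (p - q) _ i di; rewrite !mxE; apply.
by rewrite -(wdot_obtuse_sum d w); have := op q Cq; have := oq p Cp; lra.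
Qed.

End NonnegWeights.

Lemma enorm_le u v :
  (enorm u <= enorm v) = (wdot (const_mx 1) u u <= wdot (const_mx 1) v v).
Proof.
rewrite /enorm ler_sqrt; last by apply: sumr_ge0 => i _; rewrite sqr_ge0.
by congr (_ <= _); apply: eq_bigr => i _; rewrite mxE mul1r expr2.
Qed.

Lemma const1_ge0 (i : 'I_n) : 0 <= (const_mx 1 : 'rV[R]_n) 0 i.
Proof. by rewrite mxE. Qed.

Lemma is_projP C u p : convex_rV C ->
  is_proj C u p <-> C p /\ forall q, C q -> wdot (const_mx 1) (u - p) (q - p) <= 0.
Proof.
move=> Cconv; split=> [[Cp pmin]|[Cp obtuse]]; split=> // q Cq.
  by apply: (wdot_min_obtuse const1_ge0 Cconv Cp) => // x Cx; rewrite -enorm_le; exact: pmin.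
by rewrite enorm_le; exact: (obtuse_wdot_min const1_ge0 obtuse).
Qed.

Lemma is_proj_unique C u p q : convex_rV C -> is_proj C u p -> is_proj C u q -> p = q.
Proof.
move=> Cconv /(is_projP _ _ Cconv)[Cp op] /(is_projP _ _ Cconv)[Cq oq].
by apply/rowP => i; rewrite (obtuse_wdot_coord const1_ge0 Cp Cq op oq) // mxE.
Qed.

Lemma is_proj_scale C w p k : convex_rV C -> 0 < k ->
  is_proj C (p + k *: (w - p)) p <-> is_proj C w p.
Proof.
move=> Cconv k0; rewrite !is_projP // addrC addKr.
by split=> -[Cp obtuse]; split=> // q Cq; have := obtuse q Cq; rewrite wdotZl pmulr_rle0.
Qed.

End Euclidean.

Lemma closure_mapsto (T U : topologicalType) (f : T -> U) (A : set T) (B : set U) :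
  continuous f -> (forall a, A a -> B (f a)) -> forall x, closure A x -> closure B (f x).
Proof.
move=> fc AB x clx N Nfx.
have [a [Aa Na]] := clx _ (fc x _ Nfx).
by exists (f a); split => //; apply: AB.
Qed.

Lemma continuous_sum_coord (R : realType) n (F : 'I_n -> R -> R) :
  (forall i, continuous (F i)) -> continuous (fun x : 'rV[R]_n => \sum_(i < n) F i (x 0 i)).
Proof.
move=> Fc x; apply: (cvg_big add_continuous) => [|i _]; first exact: nbhs_filter.
exact: (continuous_comp (@coord_continuous R 1 n 0 i x) (Fc i (x 0 i))).
Qed.

Section ConvexHull.
Variables (R : realType) (n : nat).
Implicit Types (A : set 'rV[R]_n) (c d w x y : 'rV[R]_n).

Lemma conv_hull_sub A : A `<=` conv_hull A.
Proof.
move=> x Ax; exists 1%N, (fun=> 1), (fun=> x).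
by rewrite !big_ord1 scale1r.
Qed.

Lemma conv_hull_convex A : convex_rV (conv_hull A).
Proof.
move=> _ _ l /andP[l0 l1] [m1 [w1 [a1 [w1_ge0 [w1_sum [a1A ->]]]]]]
  [m2 [w2 [a2 [w2_ge0 [w2_sum [a2A ->]]]]]].
pose w (i : 'I_(m1 + m2)) :=
  match fintype.split i with inl j => (1 - l) * w1 j | inr j => l * w2 j end.
pose a (i : 'I_(m1 + m2)) := match fintype.split i with inl j => a1 j | inr j => a2 j end.
exists (m1 + m2)%N, w, a; rewrite !big_split_ord /= /w /a.
under eq_bigr do rewrite (unsplitK (inl _) : fintype.split (lshift _ _) = inl _).
under [X in _ + X = _]eq_bigr do rewrite (unsplitK (inr _) : fintype.split (rshift _ _) = inr _).
under [X in _ = X + _]eq_bigr do rewrite (unsplitK (inl _) : fintype.split (lshift _ _) = inl _).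
under [X in _ = _ + X]eq_bigr do rewrite (unsplitK (inr _) : fintype.split (rshift _ _) = inr _).
split; first by move=> i; case: fintype.split => j; rewrite mulr_ge0 // subr_ge0.
split; first by rewrite -!mulr_sumr w1_sum w2_sum; ring.
split; first by move=> i; case: fintype.split.
under [X in _ = X + _]eq_bigr do rewrite -scalerA.
under [X in _ = _ + X]eq_bigr do rewrite -scalerA.
by rewrite -!scaler_sumr scalerBl scale1r scalerBr addrA addrAC.
Qed.

Lemma closure_convex (C : set 'rV[R]_n) : convex_rV C -> convex_rV (closure C).
Proof.
move=> Cconv x y l l01 clx cly.
have mix_cont z : continuous (fun y' : 'rV[R]_n => z + l *: (y' - z)).
  move=> y'; apply: (@cvgD R 'rV[R]_n _ (nbhs y') _ (fun=> z) (fun y' => l *: (y' - z))).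
    exact: cvg_cst.
  apply: (@cvgZl_tmp R 'rV[R]_n _ (nbhs y') _ l (fun y' => y' - z)).
  exact: (@cvgB R 'rV[R]_n _ (nbhs y') _ id (fun=> z) _ _ cvg_id (cvg_cst z)).
have mix_cont' y' : continuous (fun z : 'rV[R]_n => z + l *: (y' - z)).
  move=> z; apply: (@cvgD R 'rV[R]_n _ (nbhs z) _ id (fun z => l *: (y' - z))).
    exact: cvg_id.
  apply: (@cvgZl_tmp R 'rV[R]_n _ (nbhs z) _ l (fun z => y' - z)).
  exact: (@cvgB R 'rV[R]_n _ (nbhs z) _ (fun=> y') id _ _ (cvg_cst y') cvg_id).
have clx_mix y' : C y' -> closure C (x + l *: (y' - x)).
  by move=> Cy'; apply: (closure_mapsto (mix_cont' y') _ clx) => z Cz; exact: Cconv.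
rewrite ((closure_id (closure C)).1 (@closed_closure _ C)).
exact: (closure_mapsto (mix_cont x) clx_mix cly).
Qed.

Lemma cl_conv_hull_convex A : convex_rV (cl_conv_hull A).
Proof. exact/closure_convex/conv_hull_convex. Qed.

Lemma dotv_continuous c : continuous (dotv c).
Proof.
apply: (continuous_sum_coord (F := fun i r => c 0 i * r)) => i r.
by apply: cvgM; [exact: cvg_cst | exact: cvg_id].
Qed.

Lemma dotv_conv_comb c m (w : 'I_m -> R) (a : 'I_m -> 'rV[R]_n) :
  dotv c (\sum_(i < m) w i *: a i) = \sum_(i < m) w i * dotv c (a i).
Proof.
rewrite /dotv; under eq_bigr do rewrite summxE mulr_sumr.
rewrite exchange_big; apply: eq_bigr => i _; rewrite mulr_sumr.
by apply: eq_bigr => j _; rewrite mxE mulrCA.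
Qed.

Lemma cl_conv_hull_halfspace A c M :
  (forall a, A a -> dotv c a <= M) -> forall x, cl_conv_hull A x -> dotv c x <= M.
Proof.
move=> AM x clx.
have half_closed : closed (dotv c @^-1` [set r | r <= M]).
  by apply: preimage_closed; [move=> y _; exact: dotv_continuous | exact: closed_le].
change ((dotv c @^-1` [set r | r <= M]) x); rewrite ((closure_id _).1 half_closed).
move: clx; apply: closureS => _ [m [w [a [w_ge0 [w_sum [aA ->]]]]]] /=.
rewrite dotv_conv_comb -[M]mul1r -w_sum mulr_suml.
by apply: ler_sum => i _; rewrite ler_wpM2l ?AM.
Qed.

Lemma dotvDl c d x : dotv (c + d) x = dotv c x + dotv d x.
Proof. by rewrite /dotv -big_split; apply: eq_bigr => i _; rewrite mxE mulrDl. Qed.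

Lemma dotvZl k c x : dotv (k *: c) x = k * dotv c x.
Proof. by rewrite /dotv mulr_sumr; apply: eq_bigr => i _; rewrite mxE mulrA. Qed.

Lemma dotvNl c x : dotv (- c) x = - dotv c x.
Proof. by rewrite -scaleN1r dotvZl mulN1r. Qed.

Lemma dotv_delta i x : dotv (delta_mx 0 i) x = x 0 i.
Proof.
rewrite /dotv (bigD1 i) //= big1 => [|j /negbTE ji]; first by rewrite mxE !eqxx mul1r addr0.
by rewrite mxE ji andbF mul0r.
Qed.

Lemma dotv_le_norm c x : (forall i, `|x 0 i| <= 1) -> dotv c x <= \sum_(i < n) `|c 0 i|.
Proof.
move=> x1; rewrite (le_trans (ler_norm _)) // (le_trans (ler_norm_sum _ _ _)) //.
by apply: ler_sum => i _; rewrite normrM ler_piMr.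
Qed.

Lemma cl_conv_hull_coord A i lo hi :
  (forall a, A a -> lo <= a 0 i <= hi) -> forall x, cl_conv_hull A x -> lo <= x 0 i <= hi.
Proof.
move=> Abox x clx; apply/andP; split.
  rewrite -lerN2 -dotv_delta -dotvNl; apply: (cl_conv_hull_halfspace _ clx) => a Aa.
  by rewrite dotvNl dotv_delta lerN2; case/andP: (Abox a Aa).
rewrite -dotv_delta; apply: (cl_conv_hull_halfspace _ clx) => a Aa.
by rewrite dotv_delta; case/andP: (Abox a Aa).
Qed.

Section BoundedGenerators.
Variable A : set 'rV[R]_n.
Hypothesis A_box : forall a, A a -> forall i, -1 <= a 0 i <= 1.

Lemma cl_conv_hull_compact : compact (cl_conv_hull A).
Proof.
have box_compact : compact [set v : 'rV[R]_n | forall i, `[-1, 1]%classic (v 0 i)].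
  by apply: (@rV_compact _ _ (fun=> `[(-1 : R), 1]%classic)) => _; exact: segment_compact.
apply: (subclosed_compact _ box_compact); first exact: closed_closure.
by move=> x clx i /=; rewrite in_itv /=; apply: (cl_conv_hull_coord _ clx) => a /A_box.
Qed.

Lemma cl_conv_hull_wdot_min d w : A !=set0 ->
  exists2 p, cl_conv_hull A p &
    forall q, cl_conv_hull A q -> wdot d (w - p) (w - p) <= wdot d (w - q) (w - q).
Proof.
move=> [a Aa].
have dist_cont : continuous (fun q : 'rV[R]_n => wdot d (w - q) (w - q)).
  pose F i r := d 0 i * ((w 0 i - r) * (w 0 i - r)).
  have -> : (fun q : 'rV[R]_n => wdot d (w - q) (w - q)) = fun q => \sum_(i < n) F i (q 0 i).
    by apply/funext => q; apply: eq_bigr => i _; rewrite !mxE.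
  apply: (@continuous_sum_coord R n F) => i r.
  have wr_cont : (w 0 i - r') @[r' --> r] --> w 0 i - r.
    exact: (cvgB (cvg_cst _) cvg_id).
  exact: (cvgM (cvg_cst _) (cvgM wr_cont wr_cont)).
have [p clp pmin] := EVT_min_rV (ex_intro _ a (subset_closure (conv_hull_sub Aa)))
  cl_conv_hull_compact (continuous_subspaceT dist_cont).
exists p; first by rewrite inE in clp.
by move=> q clq; apply: pmin; rewrite inE.
Qed.

Lemma cl_conv_hull_proj_exists w : A !=set0 -> exists p, is_proj (cl_conv_hull A) w p.
Proof.
move=> A0; have [p clp pmin] := cl_conv_hull_wdot_min (const_mx 1) w A0.
by exists p; split => // q clq; rewrite enorm_le; exact: pmin.
Qed.

Lemma cl_conv_hull_face c e b M delta : 0 < delta ->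
    (forall a, A a -> dotv c a <= M) ->
    (forall a, A a -> dotv c a < M -> dotv c a <= M - delta) ->
    (forall a, A a -> dotv c a = M -> dotv e a + b = 0) ->
  forall x, cl_conv_hull A x -> dotv c x = M -> dotv e x + b = 0.
Proof.
move=> delta0 AM Agap.
suff face_le e' b' : (forall a, A a -> dotv c a = M -> dotv e' a + b' <= 0) ->
    forall x, cl_conv_hull A x -> dotv c x = M -> dotv e' x + b' <= 0.
  move=> Aface x clx xM; apply/eqP; rewrite eq_le face_le //=; last first.
    by move=> a Aa aM; rewrite Aface.
  rewrite -oppr_le0 opprD -dotvNl face_le // => a Aa aM.
  by rewrite dotvNl -opprD Aface // oppr0.
move=> Aface x clx xM.
(* Tilting [c] by a small multiple of [e'] keeps the generators below the level
   [M - mu * b']: those on the face since [e'] is nonpositive there, the others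
   thanks to the gap. *)
pose B := \sum_(i < n) `|e' 0 i| + `|b'| + 1.
have B0 : 0 < B by rewrite ltr_wpDl ?addr_ge0 ?sumr_ge0.
have Ab a : A a -> dotv e' a + b' <= B - 1.
  move=> Aa; rewrite /B addrK lerD ?ler_norm // dotv_le_norm // => i.
  by rewrite ler_norml; apply: A_box.
pose mu := delta / B.
have mu0 : 0 < mu by rewrite divr_gt0.
have muB : mu * B = delta by rewrite mulfVK ?gt_eqF.
have tilted a : A a -> dotv (c + mu *: e') a <= M - mu * b'.
  move=> Aa; rewrite dotvDl dotvZl.
  have [aM|aM] := eqVneq (dotv c a) M.
    have : mu * (dotv e' a + b') <= 0 by rewrite pmulr_rle0 // Aface.
    by rewrite aM mulrDr; lra.
  have aM' : dotv c a < M by rewrite lt_neqAle aM AM.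
  have : mu * (dotv e' a + b') <= mu * B.
    by rewrite ler_pM2l // (le_trans (Ab a Aa)) // lerBlDr lerDl.
  by have := Agap a Aa aM'; rewrite mulrDr muB; lra.
have : mu * (dotv e' x + b') <= 0.
  by have := cl_conv_hull_halfspace tilted clx; rewrite dotvDl dotvZl xM mulrDr; lra.
by rewrite pmulr_rle0.
Qed.

End BoundedGenerators.

End ConvexHull.

Section Cycle.
Variables (R : realType) (n : nat).
Implicit Types (D : set 'rV[R]_n) (a b p u : 'rV[R]_n) (e : R).

Definition relax e u p : 'rV[R]_n := u + e *: (p - u).

Definition cycle_denom e : R := 1 + (1 - e) + (1 - e) ^+ 2.

(* The solution [u2] of [u2 = relax e (relax e (relax e u2 p3) p1) p2]. *)
Definition cycle_u2 e p1 p2 p3 : 'rV[R]_n :=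
  (cycle_denom e)^-1 *: ((1 - e) ^+ 2 *: p3 + (1 - e) *: p1 + p2).
Definition cycle_u3 e p1 p2 p3 := relax e (cycle_u2 e p1 p2 p3) p3.
Definition cycle_u1 e p1 p2 p3 := relax e (cycle_u3 e p1 p2 p3) p1.

Definition cycle_projs D1 D2 D3 e p1 p2 p3 :=
  [/\ is_proj D1 (cycle_u3 e p1 p2 p3) p1, is_proj D2 (cycle_u1 e p1 p2 p3) p2
    & is_proj D3 (cycle_u2 e p1 p2 p3) p3].

Definition cycle_target e a b : 'rV[R]_n := (2 - e)^-1 *: ((1 - e) *: a + b).

Lemma relax_coord e u p i : relax e u p 0 i = u 0 i + e * (p 0 i - u 0 i).
Proof. by rewrite !mxE. Qed.

Lemma cycle_denom_gt0 e : 0 < cycle_denom e.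
Proof. by rewrite /cycle_denom; have := sqr_ge0 (3 - 2 * e); nra. Qed.

Lemma relax_cycle_u2 e p1 p2 p3 u1 u2 u3 : e != 0 ->
    relax e u3 p1 = u1 -> relax e u1 p2 = u2 -> relax e u2 p3 = u3 ->
  u2 = cycle_u2 e p1 p2 p3.
Proof.
move=> e0 E1 E2 E3.
have /rowP fixed : u2 = relax e (relax e (relax e u2 p3) p1) p2 by rewrite E3 E1 E2.
apply/rowP => i; have := fixed i; rewrite !mxE; set x := u2 0 i => x_fixed.
have D0 : cycle_denom e != 0 by rewrite lt0r_neq0 ?cycle_denom_gt0.
have key : e * cycle_denom e * x = e * ((1 - e) ^+ 2 * p3 0 i + (1 - e) * p1 0 i + p2 0 i).
  transitivity (x - (1 - e) ^+ 3 * x); first by rewrite /cycle_denom; ring.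
  by rewrite {1}x_fixed; ring.
by apply: (mulfI (mulf_neq0 e0 D0)); rewrite key; field.
Qed.

Lemma cycle_u2_relax e p1 p2 p3 : relax e (cycle_u1 e p1 p2 p3) p2 = cycle_u2 e p1 p2 p3.
Proof.
have D0 := cycle_denom_gt0 e; rewrite /cycle_denom in D0.
by apply/rowP => i; rewrite !mxE /cycle_denom; field; rewrite lt0r_neq0.
Qed.

Lemma eps_cycle_projs D1 D2 D3 e u1 u2 u3 : e != 0 ->
  eps_cycle D1 D2 D3 e u1 u2 u3 <->
  exists p1 p2 p3, cycle_projs D1 D2 D3 e p1 p2 p3 /\
    [/\ u1 = cycle_u1 e p1 p2 p3, u2 = cycle_u2 e p1 p2 p3 & u3 = cycle_u3 e p1 p2 p3].
Proof.
move=> e0; split=> [[p1 [p2 [p3 [pr1 [pr2 [pr3 [E1 [E2 E3]]]]]]]]|].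
  have u2E := relax_cycle_u2 e0 (esym E1) (esym E2) (esym E3).
  have u3E : u3 = cycle_u3 e p1 p2 p3 by rewrite E3 u2E.
  have u1E : u1 = cycle_u1 e p1 p2 p3 by rewrite E1 u3E.
  by exists p1, p2, p3; split; [split; rewrite -?u1E -?u2E -?u3E|].
move=> [p1 [p2 [p3 [[pr1 pr2 pr3] [-> -> ->]]]]].
by exists p1, p2, p3; do !split => //; exact/esym/cycle_u2_relax.
Qed.

Lemma eps_cycle_unique D1 D2 D3 e : e != 0 ->
    (exists p1 p2 p3, cycle_projs D1 D2 D3 e p1 p2 p3 /\
       forall p1' p2' p3', cycle_projs D1 D2 D3 e p1' p2' p3' ->
         [/\ p1' = p1, p2' = p2 & p3' = p3]) ->
  exists u1 u2 u3, eps_cycle D1 D2 D3 e u1 u2 u3 /\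
    forall v1 v2 v3, eps_cycle D1 D2 D3 e v1 v2 v3 -> [/\ v1 = u1, v2 = u2 & v3 = u3].
Proof.
move=> e0 [p1 [p2 [p3 [pr puniq]]]].
exists (cycle_u1 e p1 p2 p3), (cycle_u2 e p1 p2 p3), (cycle_u3 e p1 p2 p3); split.
  by apply/eps_cycle_projs => //; exists p1, p2, p3.
move=> v1 v2 v3 /(eps_cycle_projs _ _ _ _ _ _ e0) [q1 [q2 [q3 [qr [-> -> ->]]]]].
by have [-> -> ->] := puniq _ _ _ qr.
Qed.

Lemma is_proj_cycle_u2 D e p1 p2 p3 : convex_rV D -> e < 2 ->
  is_proj D (cycle_u2 e p1 p2 p3) p3 <-> is_proj D (cycle_target e p1 p2) p3.
Proof.
move=> Dconv e2; have D0 := cycle_denom_gt0 e.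
have -> : cycle_u2 e p1 p2 p3 = p3 + ((2 - e) / cycle_denom e) *: (cycle_target e p1 p2 - p3).
  apply/rowP => i; rewrite /cycle_u2 /cycle_target !mxE.
  rewrite /cycle_denom in D0 *; by field; rewrite !lt0r_neq0 // subr_gt0.
by apply: is_proj_scale; rewrite // divr_gt0 // subr_gt0.
Qed.

Lemma is_proj_set1 a u p : is_proj [set a] u p <-> p = a.
Proof. by split=> [[]//|->]; split=> // q ->. Qed.

Lemma cycle_projs_set1 D a b e p1 p2 p3 : convex_rV D -> e < 2 ->
  cycle_projs [set a] [set b] D e p1 p2 p3 <->
  [/\ p1 = a, p2 = b & is_proj D (cycle_target e a b) p3].
Proof.
move=> Dconv e2; have u2P := is_proj_cycle_u2 _ _ _ Dconv e2.
split=> [[/is_proj_set1 -> /is_proj_set1 -> /u2P pr3] //|[-> -> /u2P pr3]].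
by split=> //; exact/is_proj_set1.
Qed.

Lemma cycle_u_coord e (p1 p2 p3 : 'rV[R]_n) i z :
  p1 0 i = z -> p2 0 i = z -> p3 0 i = z ->
  [/\ cycle_u1 e p1 p2 p3 0 i = z, cycle_u2 e p1 p2 p3 0 i = z & cycle_u3 e p1 p2 p3 0 i = z].
Proof.
move=> p1z p2z p3z; have D0 := lt0r_neq0 (cycle_denom_gt0 e).
rewrite /cycle_u1 /cycle_u3 /cycle_u2 /relax !mxE p1z p2z p3z.
by rewrite /cycle_denom in D0 *; split; field.
Qed.

End Cycle.

Section Segment.
Variable R : realType.
Implicit Types (a b e z : R) (u p q : 'rV[R]_3).

Lemma sum3 (F : 'I_3 -> R) : \sum_(i < 3) F i = F 0 + F 1 + F 2.
Proof. by rewrite !big_ord_recl big_ord0 addr0 addrA; congr (F _ + F _ + F _); exact: val_inj. Qed.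

Lemma pt3_eta q : q = pt3 (q 0 0) (q 0 1) (q 0 2).
Proof.
by apply/rowP => -[[|[|[|k]]] ik]; rewrite mxE //=; congr (q 0 _); exact: val_inj.
Qed.

Lemma wdot1_pt3 (x y z x' y' z' : R) :
  wdot (const_mx 1) (pt3 x y z) (pt3 x' y' z') = x * x' + y * y' + z * z'.
Proof. by rewrite /wdot sum3 !mxE !mul1r. Qed.

Lemma dotv3 (c q : 'rV[R]_3) : dotv c q = c 0 0 * q 0 0 + c 0 1 * q 0 1 + c 0 2 * q 0 2.
Proof. by rewrite /dotv sum3. Qed.

Lemma wdot_xy (x y : R) p q :
  wdot (const_mx 1) (pt3 x y (p 0 2) - p) q = wdot (pt3 1 1 0) (pt3 x y 0 - p) q.
Proof. by rewrite /wdot !sum3 !mxE /=; ring. Qed.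

Definition clamp z : R := if z < -1 then -1 else if 1 < z then 1 else z.

Lemma clamp_cases z :
  [\/ z < -1 /\ clamp z = -1, -1 <= z <= 1 /\ clamp z = z | 1 < z /\ clamp z = 1].
Proof.
rewrite /clamp; have [zN1|zN1] := ltP z (-1); first by constructor 1.
have [z1|z1] := ltP 1 z; first by constructor 3.
by constructor 2; split => //; apply/andP.
Qed.

Lemma clamp_id z : -1 <= z <= 1 -> clamp z = z.
Proof. by case/andP=> z1 z2; case: (clamp_cases z) => -[]; lra. Qed.

Lemma clampN z : clamp (- z) = - clamp z.
Proof. by case: (clamp_cases z) => -[zz ->]; case: (clamp_cases (- z)) => -[]; lra. Qed.

Lemma clamp_itv z : -1 <= clamp z <= 1.
Proof. by apply/andP; case: (clamp_cases z) => -[]; lra. Qed.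

Lemma clamp_min z y : -1 <= y <= 1 -> (z - clamp z) ^+ 2 <= (z - y) ^+ 2.
Proof.
case/andP=> y1 y2; case: (clamp_cases z) => -[zz ->]; last 2 first.
- by rewrite subrr expr0n sqr_ge0.
- by rewrite -subr_ge0 subr_sqr mulr_ge0 //; lra.
by rewrite -subr_ge0 subr_sqr mulr_le0 //; lra.
Qed.

Lemma clamp_cycle_le1 e z1 z2 z3 x : 0 < e < 1 -> x <= 1 ->
    z1 = z3 + e * (clamp z3 - z3) -> z2 = z1 + e * (clamp z1 - z1) ->
    z3 = z2 + e * (x - z2) ->
  z3 <= 1.
Proof.
move=> /andP[e0 e1] x1 E1 E2 E3; rewrite leNgt; apply/negP => z3_gt1.
have [[? _]|[/andP[? ?] _]|[_ c3]] := clamp_cases z3; try lra.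
have h1 : z1 - 1 = (1 - e) * (z3 - 1) by rewrite E1 c3; ring.
have [[? _]|[/andP[? ?] _]|[_ c1]] := clamp_cases z1; try nra.
have h2 : z2 - 1 = (1 - e) * (z1 - 1) by rewrite E2 c1; ring.
have h3 : z3 - 1 <= (1 - e) * (z2 - 1) by rewrite {1}E3; nra.
have contracted : z3 - 1 <= (1 - e) ^+ 3 * (z3 - 1) by rewrite h2 h1 in h3; lra.
have : (1 - e) ^+ 3 < 1 by rewrite exprn_ilt1 ?subr_ge0 ?ltW // ltrBlDl ltrDr.
nra.
Qed.

Lemma clamp_cycle e z1 z2 z3 x : 0 < e < 1 -> -1 <= x <= 1 ->
    z1 = z3 + e * (clamp z3 - z3) -> z2 = z1 + e * (clamp z1 - z1) ->
    z3 = z2 + e * (x - z2) ->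
  [/\ z1 = x, z2 = x & z3 = x].
Proof.
move=> e01 /andP[x1 x2] E1 E2 E3.
have z3_le1 := clamp_cycle_le1 e01 x2 E1 E2 E3.
have z3_geN1 : - z3 <= 1.
  apply: (clamp_cycle_le1 (z1 := - z1) (z2 := - z2) (x := - x) e01); rewrite ?clampN.
  - by rewrite lerNl.
  - by rewrite E1; ring.
  - by rewrite E2; ring.
  - by rewrite E3; ring.
have z13 : z1 = z3 by rewrite E1 clamp_id ?subrr ?mulr0 ?addr0 // -lerNl z3_geN1.
have z21 : z2 = z1 by rewrite E2 z13 clamp_id ?subrr ?mulr0 ?addr0 // -lerNl z3_geN1.
have e0 : e != 0 by case/andP: e01 => /lt0r_neq0.
have : e * (x - z3) = 0 by rewrite z21 z13 in E3; lra.
by move/eqP; rewrite mulf_eq0 (negbTE e0) subr_eq0 z21 z13 => /eqP <-.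
Qed.

Lemma pt3B (x y z x' y' z' : R) : pt3 x y z - pt3 x' y' z' = pt3 (x - x') (y - y') (z - z').
Proof. by apply/rowP => -[[|[|[|k]]] ik]; rewrite !mxE. Qed.

Lemma cycle_target_pt3 e a1 b1 a2 b2 z : e != 2 ->
  cycle_target e (pt3 a1 b1 z) (pt3 a2 b2 z) =
  pt3 (((1 - e) * a1 + a2) / (2 - e)) (((1 - e) * b1 + b2) / (2 - e)) z.
Proof.
move=> e2; have e2' : 2 - e != 0 by rewrite subr_eq0 eq_sym.
by apply/rowP => -[[|[|[|k]]] ik]; rewrite !mxE //=; field.
Qed.

Definition vsegment a b : set 'rV[R]_3 := conv_hull [set pt3 a b 1; pt3 a b (-1)].

Lemma vsegmentP a b q : vsegment a b q <-> q = pt3 a b (q 0 2) /\ -1 <= q 0 2 <= 1.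
Proof.
split=> [seg_q|[qE /andP[z1 z2]]].
  have coord i lo hi : lo <= pt3 a b 1 0 i <= hi -> lo <= pt3 a b (-1) 0 i <= hi ->
      lo <= q 0 i <= hi.
    by move=> top bot; apply: (cl_conv_hull_coord _ (subset_closure seg_q)) => _ [->|->].
  have /andP[q0 q0'] : a <= q 0 0 <= a by apply: coord; rewrite !mxE lexx.
  have /andP[q1 q1'] : b <= q 0 1 <= b by apply: coord; rewrite !mxE lexx.
  have N11 : -1 <= 1 :> R by lra.
  split; last by apply: coord; rewrite !mxE /= lexx N11.
  by rewrite {1}(pt3_eta q); congr pt3; apply/eqP; rewrite eq_le ?q0 ?q0' ?q1 ?q1'.
rewrite qE; have -> : pt3 a b (q 0 2) = pt3 a b 1 + ((1 - q 0 2) / 2) *: (pt3 a b (-1) - pt3 a b 1).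
  by apply/rowP => -[[|[|[|k]]] ik]; rewrite !mxE //=; field.
apply: conv_hull_convex; [|by apply: conv_hull_sub; left|by apply: conv_hull_sub; right].
by apply/andP; split; lra.
Qed.

Lemma vsegment_convex a b : convex_rV (vsegment a b).
Proof. exact: conv_hull_convex. Qed.

Lemma is_proj_vsegment a b u p : is_proj (vsegment a b) u p <-> p = pt3 a b (clamp (u 0 2)).
Proof.
have proj_clamp : is_proj (vsegment a b) u (pt3 a b (clamp (u 0 2))).
  split; first by apply/vsegmentP; rewrite !mxE clamp_itv.
  move=> q /vsegmentP[qE z_itv]; rewrite qE enorm_le (pt3_eta u) !pt3B !wdot1_pt3 !mxE.
  by rewrite /= lerD2l -!expr2; exact: clamp_min.
split=> [pr|->//]; apply: is_proj_unique pr proj_clamp; exact: vsegment_convex.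
Qed.

Lemma vsegment_cycle_projs a1 b1 a2 b2 (D : set 'rV[R]_3) e p1 p2 p3 :
    0 < e < 1 -> convex_rV D -> (forall q, D q -> -1 <= q 0 2 <= 1) ->
  cycle_projs (vsegment a1 b1) (vsegment a2 b2) D e p1 p2 p3 <->
  [/\ p1 = pt3 a1 b1 (p3 0 2), p2 = pt3 a2 b2 (p3 0 2)
     & is_proj D (cycle_target e (pt3 a1 b1 (p3 0 2)) (pt3 a2 b2 (p3 0 2))) p3].
Proof.
move=> e01 Dconv Dz; have e2 : e < 2 by case/andP: e01 => _ e1; lra.
have u2P := is_proj_cycle_u2 _ _ _ Dconv e2.
split=> [[/is_proj_vsegment p1E /is_proj_vsegment p2E pr3]|[p1E p2E pr3]].
  have p1z : p1 0 2 = clamp (cycle_u3 e p1 p2 p3 0 2) by rewrite {1}p1E mxE.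
  have p2z : p2 0 2 = clamp (cycle_u1 e p1 p2 p3 0 2) by rewrite {1}p2E mxE.
  have E1 : cycle_u1 e p1 p2 p3 0 2 = cycle_u3 e p1 p2 p3 0 2
      + e * (clamp (cycle_u3 e p1 p2 p3 0 2) - cycle_u3 e p1 p2 p3 0 2).
    by rewrite /cycle_u1 relax_coord p1z.
  have E2 : cycle_u2 e p1 p2 p3 0 2 = cycle_u1 e p1 p2 p3 0 2
      + e * (clamp (cycle_u1 e p1 p2 p3 0 2) - cycle_u1 e p1 p2 p3 0 2).
    by rewrite -cycle_u2_relax relax_coord p2z.
  have p3z := Dz _ pr3.1.
  have [u1z _ u3z] := clamp_cycle e01 p3z E1 E2 (relax_coord _ _ _ _).
  rewrite u3z clamp_id // in p1E; rewrite u1z clamp_id // in p2E.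
  by split=> //; apply/u2P; rewrite -p1E -p2E.
have p1z : p1 0 2 = p3 0 2 by rewrite p1E mxE.
have p2z : p2 0 2 = p3 0 2 by rewrite p2E mxE.
have [u1z _ u3z] := cycle_u_coord e p1z p2z erefl.
have p3z := Dz _ pr3.1.
split; last by apply/u2P; rewrite p1E p2E.
  by apply/is_proj_vsegment; rewrite u3z clamp_id.
by apply/is_proj_vsegment; rewrite u1z clamp_id.
Qed.

End Segment.

Section RealSequences.
Variable R : realType.
Implicit Types g : nat -> R.

Lemma nat_argmax_le g m : exists2 k1, (k1 <= m)%N & forall k, (k <= m)%N -> g k <= g k1.
Proof.
elim: m => [|m [k1 k1m k1max]]; first by exists 0%N => // k; rewrite leqn0 => /eqP ->.
have [gm|gm] := leP (g m.+1) (g k1).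
  by exists k1 => [|k]; [exact: leqW | rewrite leq_eqVlt => /orP[/eqP ->|/k1max]].
exists m.+1 => // k; rewrite leq_eqVlt => /orP[/eqP -> //|/k1max gk].
exact: le_trans gk (ltW gm).
Qed.

Lemma nat_gap_lt g M m : exists2 delta, 0 < delta &
  forall k, (k < m)%N -> g k < M -> g k <= M - delta.
Proof.
elim: m => [|m [delta delta0 gap]]; first by exists 1.
have [gm|gm] := ltP (g m) M; last first.
  exists delta => // k; rewrite ltnS leq_eqVlt => /orP[/eqP ->|/gap//].
  by rewrite ltNge gm.
exists (Num.min delta (M - g m)); first by rewrite lt_min delta0 subr_gt0.
move=> k; rewrite ltnS leq_eqVlt => /orP[/eqP -> _|km gk].
  by rewrite lerBrDl -lerBrDr ge_min lexx orbT.
by rewrite (le_trans (gap k km gk)) // lerB // ge_min lexx.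
Qed.

Lemma cvg_argmax_gap g L : g @ \oo --> L -> (exists k0, L < g k0) ->
  exists k1, (forall k, g k <= g k1) /\
    exists2 delta, 0 < delta & forall k, g k < g k1 -> g k <= g k1 - delta.
Proof.
move=> gL [k0 gk0]; pose th := (L + g k0) / 2.
have [N _ gN] := cvgr_lt L gL th (ltac:(rewrite /th; lra) : L < th).
have [k1 _ k1max] := nat_argmax_le g (N + k0).
have gk0k1 : g k0 <= g k1 by apply: k1max; rewrite leq_addl.
have gmax k : g k <= g k1.
  have [kN|kN] := leqP k (N + k0); first exact: k1max.
  have := gN k (leq_trans (leq_addr k0 N) (ltnW kN)); rewrite /th; lra.
exists k1; split => //.
have [delta delta0 gap] := nat_gap_lt g (g k1) N.
exists (Num.min delta (g k1 - th)); first by rewrite lt_min delta0 subr_gt0 /th; lra.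
move=> k gk; have [kN|kN] := ltnP k N.
  by rewrite (le_trans (gap k kN gk)) // lerB // ge_min lexx.
have : Num.min delta (g k1 - th) <= g k1 - th by rewrite ge_min lexx orbT.
by have := gN k kN; lra.
Qed.

End RealSequences.

Lemma unit_circle_line_two (R : realFieldType) (n1 n2 a1 a2 b1 b2 c1 c2 : R) : n2 != 0 ->
    a1 ^+ 2 + a2 ^+ 2 = 1 -> b1 ^+ 2 + b2 ^+ 2 = 1 -> c1 ^+ 2 + c2 ^+ 2 = 1 ->
    n1 * a1 + n2 * a2 = n1 * b1 + n2 * b2 -> n1 * a1 + n2 * a2 = n1 * c1 + n2 * c2 ->
  a1 != b1 -> a1 != c1 -> b1 = c1.
Proof.
move=> n20 ha hb hc eab eac ab ac.
have chord x1 x2 : x1 ^+ 2 + x2 ^+ 2 = 1 -> n1 * a1 + n2 * a2 = n1 * x1 + n2 * x2 ->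
    a1 != x1 -> n2 * (a1 + x1) = n1 * (a2 + x2).
  move=> hx ex ax.
  have e1 : n1 * (a1 - x1) = - (n2 * (a2 - x2)) by lra.
  have e2 : (a1 - x1) * (a1 + x1) = - ((a2 - x2) * (a2 + x2)) by rewrite -!subr_sqr; lra.
  have : (a1 - x1) * (n2 * (a1 + x1) - n1 * (a2 + x2)) = 0.
    transitivity (n2 * ((a1 - x1) * (a1 + x1)) - (a2 + x2) * (n1 * (a1 - x1))); first by ring.
    by rewrite e1 e2; ring.
  by move/eqP; rewrite mulf_eq0 subr_eq0 (negbTE ax) /= subr_eq0 => /eqP.
have kb := chord _ _ hb eab ab; have kc := chord _ _ hc eac ac.
have e3 : n2 * (b1 - c1) = n1 * (b2 - c2) by lra.
have e4 : n1 * (b1 - c1) = - (n2 * (b2 - c2)) by lra.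
have : (n1 ^+ 2 + n2 ^+ 2) * (b1 - c1) = 0 by rewrite mulrDl !expr2 -!mulrA e3 e4; ring.
have n2sq : 0 < n2 ^+ 2 by rewrite exprn_even_gt0.
move/eqP; rewrite mulf_eq0 subr_eq0 => /orP[|/eqP //].
by have := sqr_ge0 n1; rewrite paddr_eq0 ?sqr_ge0 ?ltW // => _ /andP[_]; rewrite gt_eqF.
Qed.

Section Generators.
Variables (R : realType) (t : nat -> R).
Hypothesis t_incr : forall k, (1 <= k)%N -> t k < t k.+1.
Hypothesis t1 : t 1%N = pi / 4.
Hypothesis t_lim : t @ \oo --> pi / 2.

Definition gen3 k : 'rV[R]_3 := pt3 (cos (t k)) (sin (t k)) ((-1) ^+ k).
Definition gens3 := [set x | exists k, (1 <= k)%N /\ x = gen3 k].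
Definition C3 := cl_conv_hull gens3.

Lemma t_lt k j : (1 <= k)%N -> (k < j)%N -> t k < t j.
Proof.
move=> k1; elim: j => // j IH; rewrite ltnS leq_eqVlt => /orP[/eqP <-|kj].
  exact: t_incr.
by apply: lt_trans (IH kj) _; apply: t_incr; exact: leq_trans k1 (ltnW kj).
Qed.

Lemma t_itv k : (1 <= k)%N -> pi / 4 <= t k < pi / 2.
Proof.
move=> k1; apply/andP; split.
  by move: k1; rewrite leq_eqVlt => /orP[/eqP <-|k1]; rewrite -t1 // ltW // t_lt.
apply: (lt_le_trans (t_incr k1)).
apply: (closed_cvg (fun x => t k.+1 <= x) (@closed_ge R (t k.+1)) _ _ t_lim).
exists k.+1 => // j /= kj; move: kj; rewrite leq_eqVlt => /orP[/eqP -> //|kj].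
by rewrite ltW // t_lt // ltnW.
Qed.

Lemma cos_t_gt0 k : (1 <= k)%N -> 0 < cos (t k).
Proof.
move=> /t_itv /andP[tk1 tk2]; apply: cos_gt0_pihalf; have := @pi_gt0 R.
by rewrite tk2 andbT => pi0; lra.
Qed.

Lemma sin_t_gt0 k : (1 <= k)%N -> 0 < sin (t k).
Proof.
move=> /t_itv /andP[tk1 tk2]; apply: sin_gt0_pihalf; have := @pi_gt0 R.
by rewrite tk2 andbT => pi0; lra.
Qed.

Lemma cos_t_inj k j : (1 <= k)%N -> (1 <= j)%N -> cos (t k) = cos (t j) -> k = j.
Proof.
have t0pi m : (1 <= m)%N -> t m \in `[0, pi].
  move=> /t_itv /andP[tm1 tm2]; have := @pi_gt0 R; rewrite in_itv /=.
  by move=> pi0; apply/andP; split; lra.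
move=> k1 j1 /(cos_inj (t0pi _ k1) (t0pi _ j1)) tkj.
case: (ltngtP k j) => // kj.
  by have := t_lt k1 kj; rewrite tkj ltxx.
by have := t_lt j1 kj; rewrite tkj ltxx.
Qed.

Lemma cvg_cos_t : cos (t n) @[n --> \oo] --> (0 : R).
Proof. by rewrite -cos_pihalf; apply: (continuous_cvg _ _ t_lim); exact: continuous_cos. Qed.

Lemma cvg_sin_t : sin (t n) @[n --> \oo] --> (1 : R).
Proof. by rewrite -sin_pihalf; apply: (continuous_cvg _ _ t_lim); exact: continuous_sin. Qed.

Lemma gens3_box a : gens3 a -> forall i, -1 <= a 0 i <= 1.
Proof.
move=> [k [_ ->]] i; have sgn : `|(-1) ^+ k : R| <= 1 by rewrite normrX normrN1 expr1n.
rewrite mxE -ler_norml; case: i => -[|[|[|m]]] im //=.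
  exact: cos_max.
exact: sin_max.
Qed.

Lemma gen3_C3 k : (1 <= k)%N -> C3 (gen3 k).
Proof. by move=> k1; apply/subset_closure/conv_hull_sub; exists k. Qed.

Lemma C3_coord q : C3 q -> [/\ 0 <= q 0 0, q 0 1 <= 1 & -1 <= q 0 2 <= 1].
Proof.
move=> C3q; split.
- have /andP[] // : 0 <= q 0 0 <= 1.
  apply: (cl_conv_hull_coord _ C3q) => _ [k [k1 ->]].
  by rewrite mxE /= ltW ?cos_t_gt0 ?cos_le1.
- have /andP[] // : -1 <= q 0 1 <= 1 by apply: (cl_conv_hull_coord _ C3q) => a /gens3_box.
- by apply: (cl_conv_hull_coord _ C3q) => a /gens3_box.
Qed.

Lemma C3_tangent s q : C3 q -> s * q 0 0 + q 0 1 <= 1 + s ^+ 2 / 2.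
Proof.
move=> C3q; have := cl_conv_hull_halfspace (c := pt3 s 1 0) (M := 1 + s ^+ 2 / 2) _ C3q.
rewrite dotv3 !mxE /= mul0r addr0 mul1r; apply => _ [k [k1 ->]].
rewrite dotv3 !mxE /= mul0r addr0 mul1r.
have := cos2Dsin2 (t k); have := sin_le1 (t k); have := sin_t_gt0 k1.
have := sqr_ge0 (cos (t k) - s); nra.
Qed.

Lemma gen_above_limit nx ny : 0 < nx -> 0 < ny ->
  exists2 k, (1 <= k)%N & ny < nx * cos (t k) + ny * sin (t k).
Proof.
move=> nx0 ny0; have [N _ cosN] := cvgr_lt 0 cvg_cos_t (nx / ny) (divr_gt0 nx0 ny0).
exists N.+1 => //; have := cosN N.+1 (leqnSn N); rewrite ltr_pdivlMr //.
have := cos2Dsin2 (t N.+1); have := sin_le1 (t N.+1).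
have := cos_t_gt0 (ltn0Sn N); have := sin_t_gt0 (ltn0Sn N).
set c := cos _; set sn := sin _ => sn0 c0 sn1 cs cN.
have : 1 - sn <= c ^+ 2 by nra.
have : ny * c ^+ 2 < nx * c by rewrite expr2 mulrA -subr_gt0 -mulrBl mulr_gt0 // subr_gt0 mulrC.
nra.
Qed.

Section Face.
Variables nx ny M : R.
Let g k := nx * cos (t k) + ny * sin (t k).

(* At most two generators lie on the line [g = M], so some non-vertical plane
   contains all of them. *)
Lemma face_generators_plane k1 : 0 < ny -> (1 <= k1)%N -> g k1 = M ->
  exists (c : 'rV[R]_3) (b : R), 0 < c 0 2 /\
    forall k, (1 <= k)%N -> g k = M -> dotv c (gen3 k) + b = 0.
Proof.
move=> ny0 k11 gk1.
have circle k : cos (t k) ^+ 2 + sin (t k) ^+ 2 = 1 := cos2Dsin2 (t k).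
case: (pselect (exists2 j, (1 <= j)%N & j <> k1 /\ g j = M)) => [[j j1 [jk1 gj]]|only_k1].
  pose dx := cos (t j) - cos (t k1); pose dy := sin (t j) - sin (t k1).
  pose dz : R := (-1) ^+ j - (-1) ^+ k1.
  pose c := pt3 (- (dz * dx)) (- (dz * dy)) (dx ^+ 2 + dy ^+ 2).
  exists c, (- dotv c (gen3 k1)); split.
    have dx0 : dx != 0 by rewrite subr_eq0; apply/eqP => /cos_t_inj; auto.
    by rewrite mxE /= ltr_pwDl ?sqr_ge0 ?exprn_even_gt0.
  move=> k k1' gk; have [->|/eqP kk1] := eqVneq k k1; first by rewrite addrN.
  have [->|/eqP kj] := eqVneq k j.
    by rewrite !dotv3 !mxE /= /dx /dy /dz; ring.
  have := unit_circle_line_two (n1 := nx) (lt0r_neq0 ny0) (circle k1) (circle j) (circle k)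
    (etrans gk1 (esym gj)) (etrans gk1 (esym gk)).
  have neq m m' : (1 <= m)%N -> (1 <= m')%N -> m <> m' -> cos (t m) != cos (t m').
    by move=> m1 m'1 mm'; apply/eqP => /cos_t_inj; auto.
  move=> /(_ (neq _ _ k11 j1 (nesym jk1)) (neq _ _ k11 k1' (nesym kk1))).
  by move/cos_t_inj => /(_ j1 k1') jk; case: kj.
exists (pt3 0 0 1), (- (-1) ^+ k1); split; first by rewrite mxE /= ltr01.
move=> k k1' gk; have -> : k = k1.
  by apply: contra_notP only_k1 => kk1; exists k.
by rewrite dotv3 !mxE /=; ring.
Qed.

Lemma C3_face_fiber delta P Q : 0 < ny -> 0 < delta ->
    (forall k, (1 <= k)%N -> g k <= M) ->
    (forall k, (1 <= k)%N -> g k < M -> g k <= M - delta) ->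
    (exists2 k1, (1 <= k1)%N & g k1 = M) ->
    C3 P -> C3 Q -> nx * P 0 0 + ny * P 0 1 = M ->
  Q 0 0 = P 0 0 -> Q 0 1 = P 0 1 -> Q 0 2 = P 0 2.
Proof.
move=> ny0 delta0 gM ggap [k1 k11 gk1] C3P C3Q PM Q0 Q1.
have [c [b [cz0 plane]]] := face_generators_plane ny0 k11 gk1.
have lineE q : dotv (pt3 nx ny 0) q = nx * q 0 0 + ny * q 0 1.
  by rewrite dotv3 !mxE /= mul0r addr0.
have face := cl_conv_hull_face gens3_box (c := pt3 nx ny 0) (e := c) (b := b) (M := M) delta0.
have on_face q : C3 q -> nx * q 0 0 + ny * q 0 1 = M -> dotv c q + b = 0.
  rewrite -lineE; apply: face => _ [k [k_ge1 ->]]; rewrite lineE !mxE /=.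
  - exact: gM k k_ge1.
  - exact: ggap k k_ge1.
  - exact: plane k k_ge1.
have onQ : dotv c Q + b = 0 by apply: on_face; rewrite ?Q0 ?Q1.
have : c 0 2 * (Q 0 2 - P 0 2) = 0.
  by move: (on_face P C3P PM) onQ; rewrite !dotv3 Q0 Q1; lra.
by move/eqP; rewrite mulf_eq0 gt_eqF //= subr_eq0 => /eqP.
Qed.

Lemma cvg_line_gen : g n @[n --> \oo] --> ny.
Proof.
have := @cvgD R R^o _ \oo _ (fun n => nx * cos (t n)) (fun n => ny * sin (t n)) (nx * 0) (ny * 1)
  (@cvgM R _ \oo _ (fun=> nx) (fun n => cos (t n)) nx 0 (cvg_cst _) cvg_cos_t)
  (@cvgM R _ \oo _ (fun=> ny) (fun n => sin (t n)) ny 1 (cvg_cst _) cvg_sin_t).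
by rewrite mulr0 mulr1 add0r; apply.
Qed.

Lemma face_attained P : 0 < nx -> 0 < ny -> (forall k, (1 <= k)%N -> g k <= M) ->
    C3 P -> nx * P 0 0 + ny * P 0 1 = M ->
  (exists2 k1, (1 <= k1)%N & g k1 = M) /\
  exists2 delta, 0 < delta & forall k, (1 <= k)%N -> g k < M -> g k <= M - delta.
Proof.
move=> nx0 ny0 gM C3P PM.
have g_cvg : g n.+1 @[n --> \oo] --> ny by rewrite (cvg_shiftS g); exact: cvg_line_gen.
have [k0 k01 gk0] := gen_above_limit nx0 ny0.
have above : exists k, ny < g k.+1 by exists k0.-1; rewrite prednK.
have [k1 [k1max [delta delta0 gap]]] := cvg_argmax_gap g_cvg above.
have gk1 : g k1.+1 = M.
  apply/eqP; rewrite eq_le gM //=; rewrite -PM.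
  have := cl_conv_hull_halfspace (c := pt3 nx ny 0) (M := g k1.+1) _ C3P.
  rewrite dotv3 !mxE /= mul0r addr0; apply => _ [[|k] [// _ ->]].
  by rewrite dotv3 !mxE /= mul0r addr0; exact: k1max.
split; first by exists k1.+1.
by exists delta => // -[|k] // _; rewrite -gk1; exact: gap.
Qed.

End Face.

Lemma C3_xy_fiber s P Q : 0 < s -> C3 P -> C3 Q ->
    (forall q, C3 q -> wdot (pt3 1 1 0) (pt3 s 2 0 - P) (q - P) <= 0) ->
  Q 0 0 = P 0 0 -> Q 0 1 = P 0 1 -> Q 0 2 = P 0 2.
Proof.
move=> s0 C3P C3Q obtuse Q0 Q1.
pose nx := s - P 0 0; pose ny := 2 - P 0 1; pose M := nx * P 0 0 + ny * P 0 1.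
have gM k : (1 <= k)%N -> nx * cos (t k) + ny * sin (t k) <= M.
  by move=> /gen3_C3 /obtuse; rewrite /wdot sum3 !mxE /= /M /nx /ny; nra.
have [P0 P1 _] := C3_coord C3P.
have ny0 : 0 < ny by rewrite /ny; lra.
have nyM : ny <= M.
  apply: (cvgr_to_le (cvg_line_gen nx (ny := ny))).
  by exists 1%N => // k /= /gM.
(* [nx <= 0] would force [P = (s, 1, _)], which [C3_tangent] excludes. *)
have nx0 : 0 < nx.
  rewrite ltNge; apply/negP => nx_le0.
  have nxP0 : nx * P 0 0 <= 0 by rewrite mulr_le0_ge0.
  have P1_ge1 : 1 <= P 0 1.
    have : ny * (1 - P 0 1) <= 0 by rewrite mulrBr mulr1; rewrite /M in nyM; lra.
    by rewrite pmulr_rle0 // subr_le0.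
  have sP0 : s * s <= s * P 0 0 by rewrite ler_pM2l // -subr_le0.
  have ss0 : 0 < s * s by rewrite mulr_gt0.
  by have := C3_tangent s C3P; rewrite expr2; lra.
have [gen_max [delta delta0 gap]] := face_attained nx0 ny0 gM C3P erefl.
exact: C3_face_fiber ny0 delta0 gM gap gen_max C3P C3Q erefl Q0 Q1.
Qed.

Lemma C3_lifted_proj_unique s : 0 < s ->
  exists p : 'rV[R]_3, is_proj C3 (pt3 s 2 (p 0 2)) p /\
    forall p' : 'rV[R]_3, is_proj C3 (pt3 s 2 (p' 0 2)) p' -> p' = p.
Proof.
move=> s0; pose d : 'rV[R]_3 := pt3 1 1 0.
have d_ge0 i : 0 <= d 0 i by rewrite mxE; case: i => -[|[|[|]]].
have C3conv : convex_rV C3 := @cl_conv_hull_convex R 3 gens3.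
have liftE (p : 'rV[R]_3) : is_proj C3 (pt3 s 2 (p 0 2)) p <->
    C3 p /\ forall q, C3 q -> wdot d (pt3 s 2 0 - p) (q - p) <= 0.
  by rewrite is_projP //; split=> -[C3p obtuse]; split=> // q /obtuse; rewrite wdot_xy.
have [P C3P Pmin] := cl_conv_hull_wdot_min gens3_box d (pt3 s 2 0)
  (ex_intro _ (gen3 1) (ex_intro _ 1%N (conj (leqnn 1) erefl))).
have Pobtuse := wdot_min_obtuse d_ge0 C3conv C3P Pmin.
exists P; split=> [|p' /liftE[C3p' p'obtuse]]; first exact/liftE.
have xy i : 0 < d 0 i -> p' 0 i = P 0 i := obtuse_wdot_coord d_ge0 C3p' C3P p'obtuse Pobtuse (i := i).
have x0 : p' 0 0 = P 0 0 by apply: xy; rewrite mxE ltr01.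
have x1 : p' 0 1 = P 0 1 by apply: xy; rewrite mxE ltr01.
have z := C3_xy_fiber s0 C3P C3p' Pobtuse x0 x1.
by rewrite (pt3_eta p') (pt3_eta P) x0 x1 z.
Qed.

Lemma C3_cycle_projs_unique e : 0 < e < 1 ->
  exists p1 p2 p3, cycle_projs (vsegment (-2) 2) (vsegment 2 2) C3 e p1 p2 p3 /\
    forall p1' p2' p3', cycle_projs (vsegment (-2) 2) (vsegment 2 2) C3 e p1' p2' p3' ->
      [/\ p1' = p1, p2' = p2 & p3' = p3].
Proof.
move=> e01; have [e0 e1] := andP e01.
have C3z q : C3 q -> -1 <= q 0 2 <= 1 by case/C3_coord.
have projsE p1 p2 p3 := @vsegment_cycle_projs R (-2) 2 2 2 C3 e p1 p2 p3 e01
  (@cl_conv_hull_convex R 3 gens3) C3z.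
pose s := ((1 - e) * -2 + 2) / (2 - e).
have s0 : 0 < s by rewrite divr_gt0 //; lra.
have targetE z : cycle_target e (pt3 (-2) 2 z) (pt3 2 2 z) = pt3 s 2 z.
  rewrite cycle_target_pt3; last by rewrite lt_eqF //; lra.
  by congr pt3; field; rewrite subr_eq0 gt_eqF //; lra.
have [P [Pproj Puniq]] := C3_lifted_proj_unique s0.
exists (pt3 (-2) 2 (P 0 2)), (pt3 2 2 (P 0 2)), P; split; first by apply/projsE; rewrite targetE.
by move=> p1 p2 p3 /projsE[-> ->]; rewrite targetE => /Puniq ->.
Qed.

End Generators.

Lemma set1_cycle_projs_unique (R : realType) n (A : set 'rV[R]_n) (a b : 'rV[R]_n) e :
    (forall x, A x -> forall i, -1 <= x 0 i <= 1) -> A !=set0 -> 0 < e < 1 ->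
  exists p1 p2 p3, cycle_projs [set a] [set b] (cl_conv_hull A) e p1 p2 p3 /\
    forall p1' p2' p3', cycle_projs [set a] [set b] (cl_conv_hull A) e p1' p2' p3' ->
      [/\ p1' = p1, p2' = p2 & p3' = p3].
Proof.
move=> A_box A0 /andP[_ e1]; have e2 : e < 2 by lra.
have projsE p1 p2 p3 :=
  @cycle_projs_set1 R n (cl_conv_hull A) a b e p1 p2 p3 (@cl_conv_hull_convex R n A) e2.
have [p p_proj] := cl_conv_hull_proj_exists A_box (cycle_target e a b) A0.
exists a, b, p; split; first exact/projsE.
move=> p1 p2 p3 /projsE[-> -> p3_proj]; split=> //.
exact: is_proj_unique (@cl_conv_hull_convex R n A) p3_proj p_proj.
Qed.

Theorem proposition2 (R : realType) (t : nat -> R)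
  (ht_incr : forall k : nat, (1 <= k)%N -> t k < t k.+1)
  (ht1 : t 1%N = pi / 4)
  (ht_lim : t @ \oo --> pi / 2) :
  let C1 := conv_hull [set pt3 (-2) 2 1; pt3 (-2) 2 (-1)] in
  let C2 := conv_hull [set pt3 2 2 1; pt3 2 2 (-1)] in
  let C3 := cl_conv_hull
              [set x | exists k : nat, (1 <= k)%N /\
                       x = pt3 (cos (t k)) (sin (t k)) ((-1) ^+ k)] in
  let C1' := [set pt2 (-2 : R) 2] in
  let C2' := [set pt2 (2 : R) 2] in
  let C3' := cl_conv_hull
              [set x | exists k : nat, (1 <= k)%N /\
                       x = pt2 (cos (t k)) (sin (t k))] in
  forall eps : R, 0 < eps < 1 ->
    (exists u1 u2 u3, eps_cycle C1 C2 C3 eps u1 u2 u3 /\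
       forall v1 v2 v3, eps_cycle C1 C2 C3 eps v1 v2 v3 ->
         [/\ v1 = u1, v2 = u2 & v3 = u3]) /\
    (exists u1 u2 u3, eps_cycle C1' C2' C3' eps u1 u2 u3 /\
       forall v1 v2 v3, eps_cycle C1' C2' C3' eps v1 v2 v3 ->
         [/\ v1 = u1, v2 = u2 & v3 = u3]).
Proof.
move=> C1 C2 C3 C1' C2' C3' eps eps01.
have eps0 : eps != 0 by rewrite lt0r_neq0 //; case/andP: eps01.
split; apply: eps_cycle_unique => //.
  exact (C3_cycle_projs_unique ht_incr ht1 ht_lim eps01).
apply: set1_cycle_projs_unique eps01; last by exists (pt2 (cos (t 1)) (sin (t 1))), 1%N.
move=> _ [k [_ ->]] i; rewrite mxE -ler_norml.
by case: i => -[|[|]] //= _; [exact: cos_max | exact: sin_max].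
Qed.
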